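(* Let $(\mu_t)_{t\ge 0}$ and $(d_t)$ be sequences of real numbers such that: (i) for every $t$, $\mu_t>d_t$ if and only if $\mu_{t+1}>\mu_t$; (ii) there exists $t_0>0$ such that $|d_{t+1}-d_t|\le|\mu_{t+1}-\mu_t|$ for all $t\ge t_0$; (iii) $\sum_{t=0}^{\infty}|\mu_{t+1}-\mu_t|=\infty$. Then $\mu_t$ degenerates strongly, i.e. $\lim_{t\to\infty}|\mu_t-\mu_0|=\infty$ (equivalently, $\mu_t\to\infty$ or $\mu_t\to-\infty$).
   Context: $\mu_t$ models a user's interest level in an item at time $t$ and $d_t$ an action threshold at time $t$. A real sequence $(\mu_t)$ is said to degenerate strongly if $\lim_{t\to\infty}|\mu_t-\mu_0|=\infty$. *)

From Stdlib Require Import Reals.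
From Coquelicot Require Import Coquelicot.
Open Scope R_scope.

Definition degenerates_strongly (mu : nat -> R) : Prop :=
  is_lim_seq (fun t => Rabs (mu t - mu O)) p_infty.

(* Along [t >= t0] the gap [mu t - d t] keeps its sign, since [mu] moves
   towards the side of the gap by at least as much as [d] moves at all.  Hence [mu] is
   eventually monotone, so its displacement equals its total variation, which diverges. *)

From Stdlib Require Import Reals Lra Lia.
From Coquelicot Require Import Coquelicot.
Open Scope R_scope.

Definition variation_sum (u : nat -> R) : nat -> R :=
  sum_n (fun t => Rabs (u (S t) - u t)).

Lemma variation_sum_opp (u : nat -> R) (n : nat) :
  variation_sum (fun t => - u t) n = variation_sum u n.
Proof.
  unfold variation_sum; apply sum_n_ext; intros t.
  rewrite <- Rabs_Ropp; f_equal; ring.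
Qed.

Section EventuallyNondecreasing.

Variables (u : nat -> R) (N : nat).
Hypothesis u_nondecreasing : forall t, (N <= t)%nat -> u t <= u (S t).

Lemma nondecreasing_displacement_eq_variation (n : nat) :
  u (S (n + N)) - u (S N) = variation_sum u (n + N) - variation_sum u N.
Proof.
  induction n as [|n IHn]; [simpl; ring|].
  change (S n + N)%nat with (S (n + N)).
  unfold variation_sum in *; rewrite sum_Sn; unfold plus; simpl.
  pose proof (u_nondecreasing (S (n + N)) ltac:(lia)).
  rewrite Rabs_right by lra.
  lra.
Qed.

Lemma nondecreasing_is_lim_seq_p_infty :
  is_lim_seq (variation_sum u) p_infty -> is_lim_seq u p_infty.
Proof.
  intros Hvar.
  apply (is_lim_seq_incr_n _ (S N)).
  apply is_lim_seq_ext with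
    (fun n => variation_sum u (n + N) + (u (S N) - variation_sum u N)).
  - intros n; replace (n + S N)%nat with (S (n + N)) by lia.
    pose proof (nondecreasing_displacement_eq_variation n); lra.
  - eapply is_lim_seq_plus;
      [exact (proj1 (is_lim_seq_incr_n _ N _) Hvar) | apply is_lim_seq_const | reflexivity].
Qed.

End EventuallyNondecreasing.

Lemma degenerates_strongly_of_infinite_limit (u : nat -> R) (l : Rbar) :
  Rbar_abs l = p_infty -> is_lim_seq u l -> degenerates_strongly u.
Proof.
  intros Hl Hu; unfold degenerates_strongly; rewrite <- Hl.
  apply is_lim_seq_abs.
  eapply is_lim_seq_minus; [exact Hu | apply is_lim_seq_const |].
  destruct l; simpl in Hl; try discriminate; reflexivity.
Qed.

Section ThresholdDynamics.

Variables (mu d : nat -> R) (t0 : nat).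
Hypothesis up_iff_above : forall t, mu t > d t <-> mu (S t) > mu t.
Hypothesis threshold_slower : forall t, (t0 <= t)%nat ->
  Rabs (d (S t) - d t) <= Rabs (mu (S t) - mu t).

Lemma down_of_not_above (t : nat) : mu t <= d t -> mu (S t) <= mu t.
Proof.
  intros Hle; apply Rnot_lt_le; intros Hup.
  apply up_iff_above in Hup; lra.
Qed.

Lemma above_threshold_step (t : nat) :
  (t0 <= t)%nat -> d t < mu t -> d (S t) < mu (S t).
Proof.
  intros Ht Habove.
  pose proof (proj1 (up_iff_above t) Habove) as Hup.
  pose proof (threshold_slower t Ht) as Hslow.
  rewrite (Rabs_right (mu (S t) - mu t)) in Hslow by lra.
  pose proof (Rle_abs (d (S t) - d t)); lra.
Qed.

Lemma below_threshold_step (t : nat) :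
  (t0 <= t)%nat -> mu t <= d t -> mu (S t) <= d (S t).
Proof.
  intros Ht Hbelow.
  pose proof (down_of_not_above t Hbelow) as Hdown.
  pose proof (threshold_slower t Ht) as Hslow.
  rewrite (Rabs_left1 (mu (S t) - mu t)) in Hslow by lra.
  pose proof (Rle_abs (- (d (S t) - d t))) as Hopp.
  rewrite Rabs_Ropp in Hopp; lra.
Qed.

Lemma threshold_side_persists :
  (forall t, (t0 <= t)%nat -> d t < mu t) \/
  (forall t, (t0 <= t)%nat -> mu t <= d t).
Proof.
  destruct (Rlt_le_dec (d t0) (mu t0)) as [Habove | Hbelow]; [left | right];
    intros t Ht; induction Ht as [| t Ht IH].
  - exact Habove.
  - exact (above_threshold_step t Ht IH).
  - exact Hbelow.
  - exact (below_threshold_step t Ht IH).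
Qed.

Lemma eventually_monotone :
  (forall t, (t0 <= t)%nat -> mu t <= mu (S t)) \/
  (forall t, (t0 <= t)%nat -> mu (S t) <= mu t).
Proof.
  destruct threshold_side_persists as [Habove | Hbelow]; [left | right];
    intros t Ht.
  - apply Rlt_le, up_iff_above, Habove, Ht.
  - apply down_of_not_above, Hbelow, Ht.
Qed.

End ThresholdDynamics.

Theorem theorem4 (mu d : nat -> R)
  (Hi : forall t : nat, mu t > d t <-> mu (S t) > mu t)
  (Hii : exists t0 : nat, (0 < t0)%nat /\
          forall t : nat, (t0 <= t)%nat ->
            Rabs (d (S t) - d t) <= Rabs (mu (S t) - mu t))
  (Hiii : is_lim_seq (sum_n (fun t => Rabs (mu (S t) - mu t))) p_infty) :
  degenerates_strongly mu.
Proof.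
  destruct Hii as [t0 [_ Hslow]].
  destruct (eventually_monotone mu d t0 Hi Hslow) as [Hincr | Hdecr].
  - apply (degenerates_strongly_of_infinite_limit mu p_infty); [reflexivity |].
    exact (nondecreasing_is_lim_seq_p_infty mu t0 Hincr Hiii).
  - apply (degenerates_strongly_of_infinite_limit mu m_infty); [reflexivity |].
    apply (is_lim_seq_opp mu m_infty).
    apply (nondecreasing_is_lim_seq_p_infty (fun t => - mu t) t0).
    + intros t Ht; apply Ropp_le_contravar, Hdecr, Ht.
    + exact (is_lim_seq_ext _ _ _ (fun n => eq_sym (variation_sum_opp mu n)) Hiii).
Qed.
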